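(* Let $S$ be a set of $n\ge 3$ points in the plane in general position (no four points of $S$ cocircular, no three collinear). For $i=0,\dots,n-3$ let $c_i$ be the number of 3-element subsets $\{a,b,c\}\subseteq S$ whose circumscribed circle contains exactly $i$ points of $S$ in its interior. Then for every $i\in\{0,\dots,n-3\}$, $$c_i+c_{n-i-3} = 2(i+1)(n-2-i).$$ In particular this sum is independent of the positions of the points of $S$.
   Context: Under the general position assumption every three points of $S$ determine a unique circle passing through them, and no other point of $S$ lies on it; the order of such a circle is the number of points of $S$ strictly inside it. *)

From HB Require Import structures.
From mathcomp Require Import all_boot all_order all_algebra.
From mathcomp Require Import boolp.
Set Implicit Arguments. Unset Strict Implicit. Unset Printing Implicit Defensive.
Import Order.TTheory GRing.Theory Num.Theory.
Local Open Scope ring_scope.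

Section Geometry.
Variable R : realFieldType.
Definition point := (R * R)%type.

Definition dist2 (x y : point) : R := (x.1 - y.1) ^+ 2 + (x.2 - y.2) ^+ 2.

Definition collinear (a b c : point) : Prop :=
  (b.1 - a.1) * (c.2 - a.2) - (b.2 - a.2) * (c.1 - a.1) = 0.

Definition cocircular (a b c d : point) : Prop :=
  exists (O : point) (r : R), 0 < r /\
    dist2 O a = r /\ dist2 O b = r /\ dist2 O c = r /\ dist2 O d = r.

Definition general_position (n : nat) (p : 'I_n -> point) : Prop :=
  injective p /\
  (forall i j k : 'I_n, i != j -> i != k -> j != k -> ~ collinear (p i) (p j) (p k)) /\
  (forall i j k l : 'I_n, i != j -> i != k -> i != l -> j != k -> j != l -> k != l ->
      ~ cocircular (p i) (p j) (p k) (p l)).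

Definition in_circle (n : nat) (p : 'I_n -> point) (A : {set 'I_n}) (d : 'I_n) : Prop :=
  exists (O : point) (r : R),
    (forall x, x \in A -> dist2 O (p x) = r) /\ dist2 O (p d) < r.

Definition circle_order (n : nat) (p : 'I_n -> point) (A : {set 'I_n}) : nat :=
  #|[set d : 'I_n | `[< in_circle p A d >]]|.

Definition c_count (n : nat) (p : 'I_n -> point) (i : nat) : nat :=
  #|[set A : {set 'I_n} | (#|A| == 3)%N && (circle_order p A == i)]|.
End Geometry.

(* Lift the points to the paraboloid z = x^2 + y^2.  A triple A of a set T has
   all other points of T inside its circle, or all of them outside, exactly when
   its lift spans a facet of the convex hull of the lifted T, and a triangulated
   sphere with m vertices has 2m - 4 facets.  We count these facets directly:
   sort T along a generic direction and charge each facet to its middle vertex v.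
   Inverting at v turns the circles through v into lines, and the facets charged
   to v into the hull edges of the inverted points that cross the sweep line
   through v; there are two of them unless v is extremal.
   Summing over the m-subsets of S, a triple with i points inside and
   o = n - 3 - i outside is counted C(i, m - 3) + C(o, m - 3) times, hence
   sum_i (c_i + c_(n-3-i)) C(i, k) = 2 (k + 1) C(n, k + 3) for all k.  This
   system is unitriangular and 2 (i + 1) (n - 2 - i) solves it. *)

From mathcomp Require Import all_boot all_order all_algebra.
From mathcomp Require Import ring lra zify.
From mathcomp Require Import boolp.
Set Implicit Arguments. Unset Strict Implicit. Unset Printing Implicit Defensive.
Import Order.TTheory GRing.Theory Num.Theory.

Local Open Scope ring_scope.

Section PlaneGeometry.
Variable R : realFieldType.
Implicit Types a b c d o u x : point R.

Definition orient a b c : R :=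
  (b.1 - a.1) * (c.2 - a.2) - (b.2 - a.2) * (c.1 - a.1).

(* The determinant with rows (a - d, za), (b - d, zb), (c - d, zc). *)
Definition lift_det a b c d (za zb zc : R) : R :=
  (a.1 - d.1) * ((b.2 - d.2) * zc - zb * (c.2 - d.2))
  - (a.2 - d.2) * ((b.1 - d.1) * zc - zb * (c.1 - d.1))
  + za * ((b.1 - d.1) * (c.2 - d.2) - (b.2 - d.2) * (c.1 - d.1)).

Definition incircle a b c d : R :=
  lift_det a b c d (dist2 d a) (dist2 d b) (dist2 d c).

Lemma incircle_circle o a b c d r :
  dist2 o a = r -> dist2 o b = r -> dist2 o c = r ->
  incircle a b c d = (r - dist2 o d) * orient a b c.
Proof.
move=> oa ob oc.
have -> : incircle a b c d = lift_det a b c d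
    (dist2 o a - dist2 o d) (dist2 o b - dist2 o d) (dist2 o c - dist2 o d).
  by rewrite /incircle /lift_det /dist2; ring.
by rewrite oa ob oc /lift_det /orient; ring.
Qed.

Definition circumcenter a b c : point R :=
  let B := (b.1 ^+ 2 + b.2 ^+ 2) - (a.1 ^+ 2 + a.2 ^+ 2) in
  let C := (c.1 ^+ 2 + c.2 ^+ 2) - (a.1 ^+ 2 + a.2 ^+ 2) in
  ((B * (c.2 - a.2) - C * (b.2 - a.2)) / (2 * orient a b c),
   ((b.1 - a.1) * C - (c.1 - a.1) * B) / (2 * orient a b c)).

Lemma circumcenterP a b c : orient a b c != 0 ->
  dist2 (circumcenter a b c) b = dist2 (circumcenter a b c) a /\
  dist2 (circumcenter a b c) c = dist2 (circumcenter a b c) a.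
Proof. by rewrite /dist2 /circumcenter /orient /= => o0; split; field. Qed.

Lemma dist2_ge0 a b : 0 <= dist2 a b.
Proof. by rewrite addr_ge0 ?sqr_ge0. Qed.

Lemma dist2_eq0 a b : (dist2 a b == 0) = (a == b).
Proof.
case: a b => [a1 a2] [b1 b2]; rewrite /dist2 /= paddr_eq0 ?sqr_ge0 //.
by rewrite !sqrf_eq0 !subr_eq0 xpair_eqE.
Qed.

Lemma dist2_gt0 a b : (0 < dist2 a b) = (a != b).
Proof. by rewrite lt_def dist2_ge0 andbT dist2_eq0. Qed.

Definition invert c x : point R :=
  (c.1 + (x.1 - c.1) / dist2 c x, c.2 + (x.2 - c.2) / dist2 c x).

Lemma orient_invert c a b x : c != a -> c != b -> c != x ->
  orient (invert c a) (invert c b) (invert c x) * (dist2 c a * dist2 c b * dist2 c x) =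
  - incircle c a b x.
Proof.
rewrite -!dist2_gt0; case: c a b x => [c1 c2] [a1 a2] [b1 b2] [x1 x2].
rewrite /orient /invert /incircle /lift_det /dist2 /= => ca cb cx.
by field; rewrite !gt_eqF.
Qed.

Definition shear (e : R) u : point R := (u.1 + e * u.2, u.2).

Lemma orient_shear e a b c : orient (shear e a) (shear e b) (shear e c) = orient a b c.
Proof. by rewrite /orient /=; ring. Qed.

Definition key (e : R) u := u.1 + e * u.2.

Lemma shear_invert_x e c x :
  (shear e (invert c x)).1 = key e c + (key e x - key e c) / dist2 c x.
Proof. by rewrite /shear /invert /key /=; ring. Qed.

Definition reflect_y u : point R := (u.1, - u.2).

Lemma orient_reflect_y a b c :
  orient (reflect_y a) (reflect_y b) (reflect_y c) = - orient a b c.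
Proof. by rewrite /orient /=; ring. Qed.

Lemma orient_aba a b : orient a b a = 0. Proof. by rewrite /orient; ring. Qed.
Lemma orient_abb a b : orient a b b = 0. Proof. by rewrite /orient; ring. Qed.

End PlaneGeometry.

(** * Hull edges crossing a line *)

Section CrossingEdges.
Variables (R : realFieldType) (I : finType) (q : I -> point R).
Variables (Q : {set I}) (k0 : R).

Definition all_left b c :=
  [forall x in Q :\: [set b; c], 0 < orient (q b) (q c) (q x)].
Definition all_right b c :=
  [forall x in Q :\: [set b; c], orient (q b) (q c) (q x) < 0].
Definition hull_edge b c := all_left b c || all_right b c.

Definition crossing (bc : I * I) :=
  [&& bc.1 \in Q, bc.2 \in Q, (q bc.1).1 < k0 & k0 < (q bc.2).1].

Definition crossing_height (bc : I * I) :=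
  (q bc.1).2 + (k0 - (q bc.1).1) * ((q bc.2).2 - (q bc.1).2) / ((q bc.2).1 - (q bc.1).1).

Lemma crossing_neq bc : crossing bc -> bc.1 != bc.2.
Proof.
by case/and4P=> _ _ h1 h2; apply: contraTneq (lt_trans h1 h2) => ->; rewrite ltxx.
Qed.

Lemma crossing_height_sub bc de : crossing bc -> crossing de ->
  exists u v, [/\ 0 < u, 0 < v & crossing_height de - crossing_height bc =
    u * orient (q bc.1) (q bc.2) (q de.1) + v * orient (q bc.1) (q bc.2) (q de.2)].
Proof.
case: bc de => [b c] [d e] /and4P [_ _ /= hb hc] /and4P [_ _ /= hd he].
have Dbc : 0 < (q c).1 - (q b).1 by rewrite subr_gt0 (lt_trans hb hc).
have Dde : 0 < (q e).1 - (q d).1 by rewrite subr_gt0 (lt_trans hd he).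
pose D := ((q c).1 - (q b).1) * ((q e).1 - (q d).1).
have D0 : 0 < D by rewrite mulr_gt0.
exists (((q e).1 - k0) / D), ((k0 - (q d).1) / D).
split; rewrite ?divr_gt0 ?subr_gt0 //.
rewrite /crossing_height /D /orient /=; field.
by rewrite !gt_eqF.
Qed.

Lemma all_left_gt0 b c x : all_left b c -> x \in Q -> x != b -> x != c ->
  0 < orient (q b) (q c) (q x).
Proof. by move=> /forall_inP H xQ xb xc; apply: H; rewrite !inE negb_or xb xc. Qed.

Lemma all_left_ge0 b c x : all_left b c -> x \in Q -> 0 <= orient (q b) (q c) (q x).
Proof.
move=> Hl xQ; have [->|xb] := eqVneq x b; first by rewrite orient_aba.
have [->|xc] := eqVneq x c; first by rewrite orient_abb.
by rewrite ltW // all_left_gt0.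
Qed.

Lemma all_left_crossing_below bc de : crossing bc -> all_left bc.1 bc.2 ->
  crossing de -> de != bc -> crossing_height bc < crossing_height de.
Proof.
case: bc de => [b c] [d e] bcX Hl deX deb; rewrite -subr_gt0.
have [u [v [u0 v0 ->]]] := crossing_height_sub bcX deX.
have /and4P [/= bQ cQ hb hc] := bcX; have /and4P [/= dQ eQ hd he] := deX.
have o1 := all_left_ge0 Hl dQ; have o2 := all_left_ge0 Hl eQ.
have [db|] := eqVneq d b; last first.
  move=> db; have dc : d != c by apply: contraTneq hd => ->; rewrite -leNgt ltW.
  by have := all_left_gt0 Hl dQ db dc; nra.
have ec : e != c by apply: contraNneq deb => ec; rewrite db ec.
have eb : e != b by apply: contraTneq he => ->; rewrite -leNgt ltW.
by have := all_left_gt0 Hl eQ eb ec; nra.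
Qed.

Hypothesis off_line : forall x, x \in Q -> (q x).1 != k0.
Hypothesis no_collinear : forall b c d, b \in Q -> c \in Q -> d \in Q ->
  b != c -> b != d -> c != d -> orient (q b) (q c) (q d) != 0.

Lemma argmin_crossing_all_left bc : crossing bc ->
  (forall de, crossing de -> crossing_height bc <= crossing_height de) ->
  all_left bc.1 bc.2.
Proof.
case: bc => b c bcX Hmin; apply/forall_inP => x; rewrite !inE negb_or /=.
case/andP=> /andP [xb xc] xQ; have /and4P [/= bQ cQ hb hc] := bcX.
have bx : b != x by rewrite eq_sym.
have cx : c != x by rewrite eq_sym.
have := no_collinear bQ cQ xQ (crossing_neq bcX) bx cx.
case: ltgtP => // o _.
(* Were x right of bc, swapping x for b or c would give a lower crossing edge. *)
have lower (de : I * I) : crossing de -> orient (q b) (q c) (q de.1) <= 0 ->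
    orient (q b) (q c) (q de.2) <= 0 ->
    (orient (q b) (q c) (q de.1) < 0) || (orient (q b) (q c) (q de.2) < 0) -> false.
  move=> deX o1 o2 /orP o12; have := Hmin _ deX; rewrite -subr_ge0.
  have [u [v [u0 v0 ->]]] := crossing_height_sub bcX deX; nra.
have := off_line xQ; case: ltgtP => // hx _.
- by apply: (lower (x, c)); rewrite /crossing /= ?orient_abb ?xQ ?cQ ?hx ?hc ?o ?(ltW o).
- by apply: (lower (b, x)); rewrite /crossing /= ?orient_aba ?xQ ?bQ ?hx ?hb ?o ?(ltW o) ?orbT.
Qed.

End CrossingEdges.

Section CrossingHullEdges.
Variables (R : realFieldType) (I : finType) (q : I -> point R).
Variables (Q : {set I}) (k0 : R).
Hypothesis off_line : forall x, x \in Q -> (q x).1 != k0.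
Hypothesis no_collinear : forall b c d, b \in Q -> c \in Q -> d \in Q ->
  b != c -> b != d -> c != d -> orient (q b) (q c) (q d) != 0.
Hypothesis three_points : (2 < #|Q|)%N.

Local Notation crossing := (crossing q Q k0).
Local Notation height := (crossing_height q k0).

Let qr x := reflect_y (q x).

Lemma all_left_reflect_y b c : all_left qr Q b c = all_right q Q b c.
Proof. by apply: eq_forallb_in => x _; rewrite orient_reflect_y oppr_gt0. Qed.

Lemma crossing_height_reflect_y bc : crossing_height qr k0 bc = - height bc.
Proof. by rewrite /crossing_height /=; ring. Qed.

Lemma all_right_crossing_above bc de : crossing bc -> all_right q Q bc.1 bc.2 ->
  crossing de -> de != bc -> height de < height bc.
Proof.
move=> bcX Hr deX ne; rewrite -ltrN2 -!crossing_height_reflect_y.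
by have := all_left_crossing_below (q := qr) bcX; rewrite all_left_reflect_y; apply.
Qed.

Lemma argmax_crossing_all_right bc : crossing bc ->
  (forall de, crossing de -> height de <= height bc) -> all_right q Q bc.1 bc.2.
Proof.
move=> bcX Hmax; rewrite -all_left_reflect_y.
apply: (argmin_crossing_all_left (q := qr) off_line _ bcX).
  by move=> b c d *; rewrite orient_reflect_y oppr_eq0 no_collinear.
by move=> de deX; rewrite !crossing_height_reflect_y lerN2 Hmax.
Qed.

Lemma setD_pair_neq0 b c : Q :\: [set b; c] != set0.
Proof.
apply: contraTneq three_points => /eqP; rewrite setD_eq0 -leqNgt.
by move/subset_leq_card/leq_trans; apply; rewrite cards2; case: (b != c).
Qed.

Lemma card_crossing_hull_edges :
  (exists2 x, x \in Q & (q x).1 < k0) -> (exists2 x, x \in Q & k0 < (q x).1) ->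
  #|[set bc | crossing bc && hull_edge q Q bc.1 bc.2]| = 2%N.
Proof.
move=> [xl xlQ hl] [xu xuQ hu].
have X0 : crossing (xl, xu) by apply/and4P.
have [bl blX blmin] := arg_minP height X0.
have [br brX brmax] := arg_maxP height X0.
have Hl := argmin_crossing_all_left off_line no_collinear blX blmin.
have Hr := argmax_crossing_all_right brX brmax.
have bl_br : bl != br.
  apply: contraTneq Hr => <-; have /set0Pn [x xD] := setD_pair_neq0 bl.1 bl.2.
  by apply/negP => /forall_inP/(_ x xD); rewrite ltNge ltW // (forall_inP Hl x xD).
suff -> : [set bc | crossing bc && hull_edge q Q bc.1 bc.2] = [set bl; br].
  by rewrite cards2 bl_br.
apply/setP => bc; rewrite !inE; apply/andP/orP => [[bcX /orP[] H]|].
- left; apply: contraTT (blmin _ bcX) => ne.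
  by rewrite -ltNge (all_left_crossing_below bcX H blX) // eq_sym.
- right; apply: contraTT (brmax _ bcX) => ne.
  by rewrite -ltNge (all_right_crossing_above bcX H brX) // eq_sym.
- by case=> /eqP ->; rewrite /hull_edge ?blX ?brX ?Hl ?Hr ?orbT.
Qed.

End CrossingHullEdges.

Section GeneralPosition.
Variables (R : realFieldType) (n : nat) (p : 'I_n -> point R).
Hypothesis gp : general_position p.
Implicit Types A T : {set 'I_n}.

Lemma gp_inj : injective p. Proof. by case: gp. Qed.

Lemma gp_orient_neq0 i j k : i != j -> i != k -> j != k -> orient (p i) (p j) (p k) != 0.
Proof. by case: gp => _ [ncol _] ij ik jk; apply/eqP/ncol. Qed.

Definition in_circumcircle i j k d :=
  0 < orient (p i) (p j) (p k) * incircle (p i) (p j) (p k) (p d).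

Lemma in_circleE i j k d : i != j -> i != k -> j != k ->
  in_circle p [set i; j; k] d <-> in_circumcircle i j k d.
Proof.
move=> ij ik jk; have o0 := gp_orient_neq0 ij ik jk.
have o2 : 0 < orient (p i) (p j) (p k) ^+ 2 by rewrite exprn_even_gt0.
split=> [[o [r [onA od]]]|].
  have [oi oj ok] : [/\ dist2 o (p i) = r, dist2 o (p j) = r & dist2 o (p k) = r].
    by split; apply: onA; rewrite !inE eqxx ?orbT.
  by rewrite /in_circumcircle (incircle_circle _ oi oj ok) mulrCA -expr2 mulr_gt0 ?subr_gt0.
have [oj ok] := circumcenterP o0; set o := circumcenter _ _ _ in oj ok.
rewrite /in_circumcircle (incircle_circle _ (erefl (dist2 o (p i))) oj ok) mulrCA.
rewrite -expr2 pmulr_lgt0 // subr_gt0 => od.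
by exists o, (dist2 o (p i)); split=> // x; rewrite !inE -orbA => /or3P [] /eqP ->.
Qed.

Lemma incircle_neq0 i j k d : i != j -> i != k -> j != k ->
  d != i -> d != j -> d != k -> incircle (p i) (p j) (p k) (p d) != 0.
Proof.
move=> ij ik jk di dj dk; have o0 := gp_orient_neq0 ij ik jk.
have [oj ok] := circumcenterP o0; set o := circumcenter _ _ _ in oj ok.
rewrite (incircle_circle _ (erefl (dist2 o (p i))) oj ok) mulf_eq0 negb_or o0 andbT.
rewrite subr_eq0; apply/eqP => od; case: gp => _ [_ ncirc].
apply: (ncirc i j k d) => //; rewrite 1?eq_sym //.
exists o, (dist2 o (p i)); split; last by rewrite oj ok -od.
rewrite dist2_gt0; apply: contra_neq ij => oi; apply: gp_inj.
by apply/eqP; rewrite -oi -dist2_eq0 oj -oi dist2_eq0.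
Qed.

Definition inside A := [set d | `[< in_circle p A d >]].
Definition outside A := ~: (A :|: inside A).

(* Lifted to the paraboloid z = x^2 + y^2, the triangle A is a facet of the
   convex hull of T. *)
Definition facet T A := (T :\: A \subset inside A) || (T :\: A \subset outside A).

Lemma disjoint_inside A : [disjoint A & inside A].
Proof.
apply/pred0P => x /=; rewrite inE; apply/negbTE/nandP.
case: (boolP (x \in A)) => xA; [right | by left].
by apply/asboolP => -[o [r [onA]]]; rewrite onA // ltxx.
Qed.

Lemma disjoint_outside A : [disjoint A & outside A].
Proof. by apply/pred0P => x /=; rewrite !inE; case: (x \in A). Qed.

Lemma mem_inside3 i j k x : i != j -> i != k -> j != k ->
  (x \in inside [set i; j; k]) = in_circumcircle i j k x.
Proof. by move=> ij ik jk; rewrite inE; apply/asboolP/idP => /(in_circleE _ ij ik jk). Qed.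

(* Any e exceeding every |dx / dy| separates the points. *)
Lemma exists_key_inj : exists e : R, injective (fun i => key e (p i)).
Proof.
pose slope (ij : 'I_n * 'I_n) := ((p ij.1).1 - (p ij.2).1) / ((p ij.1).2 - (p ij.2).2).
pose S : R := \sum_ij `|slope ij|.
have S0 : 0 <= S by rewrite sumr_ge0.
exists (1 + S) => i j; rewrite /key => E; apply: gp_inj.
have [dy0|dy] := eqVneq (p i).2 (p j).2.
  have dx0 : (p i).1 = (p j).1 by move: E; rewrite dy0; lra.
  by rewrite [p i]surjective_pairing [p j]surjective_pairing dx0 dy0.
have : `|slope (i, j)| <= S by rewrite /S (bigD1 (i, j)) //= lerDl sumr_ge0.
have -> : slope (i, j) = - (1 + S).
  rewrite /slope /=; apply: (mulIf (_ : (p i).2 - (p j).2 != 0)); first by rewrite subr_eq0.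
  rewrite divfK ?subr_eq0 //; lra.
by rewrite normrN ger0_norm ?addr_ge0 // => le_S; exfalso; lra.
Qed.

End GeneralPosition.

(** * Facets of the lifted point set *)

Lemma card3P (I : finType) (A : {set I}) : #|A| = 3%N ->
  exists a b c, [/\ a != b, a != c, b != c & A = [set a; b; c]].
Proof.
move=> A3; have /card_gt0P [a aA] : (0 < #|A|)%N by rewrite A3.
have /eqP/cards2P [b [c [bc Eb]]] : #|A :\ a| = 2%N.
  by move: A3; rewrite (cardsD1 a A) aA => -[].
have : b \in A :\ a by rewrite Eb !inE eqxx.
have : c \in A :\ a by rewrite Eb !inE eqxx orbT.
rewrite !inE => /andP [ca _] /andP [ba _].
exists a, b, c; rewrite -(setD1K aA) Eb setUA.
by split; rewrite // eq_sym.
Qed.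

Lemma cards3 (I : finType) (a b c : I) : a != b -> a != c -> b != c ->
  #|[set a; b; c]| = 3%N.
Proof. by move=> ab ac bc; rewrite -setUA cardsU1 cards2 bc !inE negb_or ab ac. Qed.

Section LiftedFacets.
Variables (R : realFieldType) (n : nat) (p : 'I_n -> point R).
Hypothesis gp : general_position p.
Variable e : R.
Local Notation kp i := (key e (p i)).
Hypothesis key_inj : injective (fun i => kp i).

Lemma kp_neq i j : i != j -> kp i != kp j.
Proof. by apply: contra_neq => /key_inj. Qed.

Definition inverted v x := shear e (invert (p v) (p x)).

Let dist2_p_gt0 v x : v != x -> 0 < dist2 (p v) (p x).
Proof. by rewrite dist2_gt0 (inj_eq (gp_inj gp)). Qed.

Lemma inverted_lt v x : v != x -> ((inverted v x).1 < kp v) = (kp x < kp v).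
Proof.
by move=> vx; rewrite shear_invert_x gtrDl pmulr_llt0 ?invr_gt0 ?dist2_p_gt0 // subr_lt0.
Qed.

Lemma inverted_gt v x : v != x -> (kp v < (inverted v x).1) = (kp v < kp x).
Proof.
by move=> vx; rewrite shear_invert_x ltrDl pmulr_lgt0 ?invr_gt0 ?dist2_p_gt0 // subr_gt0.
Qed.

Lemma inverted_neq v x : v != x -> (inverted v x).1 != kp v.
Proof.
move=> vx; case: (ltgtP (kp x) (kp v)) => [xv|vx'|/key_inj xv].
- by rewrite lt_eqF // inverted_lt.
- by rewrite gt_eqF // inverted_gt.
- by rewrite xv eqxx in vx.
Qed.

Lemma orient_inverted v b c x : v != b -> v != c -> v != x ->
  orient (inverted v b) (inverted v c) (inverted v x) *
    (dist2 (p v) (p b) * dist2 (p v) (p c) * dist2 (p v) (p x)) =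
  - incircle (p v) (p b) (p c) (p x).
Proof. by move=> vb vc vx; rewrite orient_shear orient_invert // (inj_eq (gp_inj gp)). Qed.

Lemma orient_inverted_gt0 v b c x : v != b -> v != c -> v != x ->
  (0 < orient (inverted v b) (inverted v c) (inverted v x)) =
  (incircle (p v) (p b) (p c) (p x) < 0).
Proof.
move=> vb vc vx; rewrite -oppr_gt0 -(orient_inverted vb vc vx).
by rewrite pmulr_lgt0 // !mulr_gt0 ?dist2_p_gt0.
Qed.

Lemma orient_inverted_lt0 v b c x : v != b -> v != c -> v != x ->
  (orient (inverted v b) (inverted v c) (inverted v x) < 0) =
  (0 < incircle (p v) (p b) (p c) (p x)).
Proof.
move=> vb vc vx; rewrite -oppr_lt0 -(orient_inverted vb vc vx).
by rewrite pmulr_llt0 // !mulr_gt0 ?dist2_p_gt0.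
Qed.

Lemma orient_inverted_neq0 v b c x : v != b -> v != c -> v != x ->
  b != c -> b != x -> c != x -> orient (inverted v b) (inverted v c) (inverted v x) != 0.
Proof.
move=> vb vc vx bc bx cx; apply/eqP => o0.
move: (orient_inverted vb vc vx); rewrite o0 mul0r => /esym/eqP.
by rewrite oppr_eq0; apply/negP; apply: incircle_neq0; rewrite // eq_sym.
Qed.

Variable T : {set 'I_n}.

Lemma hull_edge_inverted v b c : b \in T :\ v -> c \in T :\ v -> b != c ->
  hull_edge (inverted v) (T :\ v) b c = facet p T [set v; b; c].
Proof.
rewrite !in_setD1 => /andP [bv _] /andP [cv _] bc.
have vb : v != b by rewrite eq_sym.
have vc : v != c by rewrite eq_sym.
set A := [set v; b; c].
have DA : (T :\ v) :\: [set b; c] = T :\: A by rewrite setDDl setUA.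
have notA x : x \in T :\: A -> [/\ v != x, x != v, x != b & x != c].
  by rewrite !inE !negb_or => /andP [/andP [/andP [xv xb] xc] _]; rewrite eq_sym.
pose o := orient (p v) (p b) (p c); pose I x := incircle (p v) (p b) (p c) (p x).
have o0 : o != 0 := gp_orient_neq0 gp vb vc bc.
have ins x : x \in T :\: A -> (x \in inside p A) = (0 < o * I x).
  by move=> xD; rewrite mem_inside3.
have outs x : x \in T :\: A -> (x \in outside p A) = (o * I x < 0).
  move=> xD; have [_ xv xb xc] := notA x xD.
  have I0 : o * I x != 0 by rewrite mulf_neq0 ?incircle_neq0.
  have xA : x \notin A by move: xD; rewrite in_setD => /andP [].
  by rewrite in_setC in_setU ins // (negbTE xA) /= -leNgt le_eqVlt (negbTE I0).
have forall_sub (P : pred 'I_n) (S : {set 'I_n}) :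
    {in T :\: A, forall x, P x = (x \in S)} -> [forall x in T :\: A, P x] = (T :\: A \subset S).
  by move=> PS; apply/forall_inP/subsetP => H x xD; [rewrite -PS | rewrite PS]; auto.
rewrite /hull_edge /all_left /all_right /facet DA.
case: (ltgtP o 0) => o_sgn; last by rewrite o_sgn eqxx in o0.
- congr orb; apply: forall_sub => x /[dup] xD /notA [vx _ _ _].
    by rewrite orient_inverted_gt0 // ins // nmulr_rgt0.
  by rewrite orient_inverted_lt0 // outs // nmulr_rlt0.
- rewrite orbC; congr orb; apply: forall_sub => x /[dup] xD /notA [vx _ _ _].
    by rewrite orient_inverted_lt0 // ins // pmulr_rgt0.
  by rewrite orient_inverted_gt0 // outs // pmulr_rlt0.
Qed.

Definition middle_edges v := [set wc : 'I_n * 'I_n | [&& wc.1 \in T :\ v,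
  wc.2 \in T :\ v, kp wc.1 < kp v, kp v < kp wc.2 & facet p T [set v; wc.1; wc.2]]].

Definition key_interior v :=
  [exists x in T, kp x < kp v] && [exists x in T, kp v < kp x].

(* Inversion at v sends the facets with middle vertex v to the hull edges of the
   inverted T :\ v crossing the line x = kp v. *)
Lemma card_middle_edges v : v \in T -> (3 < #|T|)%N ->
  #|middle_edges v| = if key_interior v then 2%N else 0%N.
Proof.
move=> vT T4; have Tv x : x \in T :\ v -> v != x by rewrite in_setD1 eq_sym => /andP [].
case: ifP => Hint; last first.
  apply/eqP; rewrite cards_eq0; apply/eqP/setP => -[w c]; rewrite !inE /=.
  apply/negbTE/negP => /and5P [/andP [_ wT] /andP [_ cT] hw hc _].
  by move: Hint; rewrite /key_interior; case/nandP; apply/negP/negPn/exists_inP;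
    [exists w | exists c].
have T3 : (2 < #|T :\ v|)%N by move: T4; rewrite (cardsD1 v T) vT.
have off_line x : x \in T :\ v -> (inverted v x).1 != kp v by move/Tv/inverted_neq.
have no_collinear b c d : b \in T :\ v -> c \in T :\ v -> d \in T :\ v ->
    b != c -> b != d -> c != d -> orient (inverted v b) (inverted v c) (inverted v d) != 0.
  by move=> /Tv vb /Tv vc /Tv vd; apply: orient_inverted_neq0.
have inTv x : x \in T -> kp x != kp v -> x \in T :\ v.
  by move=> xT; rewrite in_setD1 xT andbT; apply: contra_neq => ->.
have [/exists_inP [xl xlT hl] /exists_inP [xu xuT hu]] := andP Hint.
have xlv : xl \in T :\ v by rewrite inTv // lt_eqF.
have xuv : xu \in T :\ v by rewrite inTv // gt_eqF.
rewrite -(card_crossing_hull_edges off_line no_collinear T3); last 2 first.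
- by exists xl; rewrite // inverted_lt ?Tv.
- by exists xu; rewrite // inverted_gt ?Tv.
apply: eq_card => -[w c]; rewrite inE [in RHS]inE /crossing /=.
case wT: (w \in T :\ v); case cT: (c \in T :\ v) => //=.
rewrite inverted_lt ?inverted_gt ?Tv //.
case: ltP => hw; case: ltP => hc //=; rewrite hull_edge_inverted //.
by apply: contraTneq (lt_trans hw hc) => ->; rewrite ltxx.
Qed.

Lemma sort3_key a b c : a != b -> a != c -> b != c ->
  exists v w u, [/\ [set a; b; c] = [set v; w; u], kp w < kp v & kp v < kp u].
Proof.
wlog lt_ab : a b / kp a < kp b.
  move=> gen ab ac bc; case: (ltgtP (kp a) (kp b)) => [lt_ab|lt_ba|/key_inj/eqP];
    [exact: gen | | by rewrite (negbTE ab)].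
  by rewrite [[set a; b]]setUC; apply: gen; rewrite // eq_sym.
move=> _ ac bc; case: (ltgtP (kp c) (kp a)) => [lt_ca|lt_ac|/key_inj/eqP];
  last by rewrite eq_sym (negbTE ac).
  by exists a, c, b; rewrite setUAC.
case: (ltgtP (kp c) (kp b)) => [lt_cb|lt_bc|/key_inj/eqP]; last by rewrite eq_sym (negbTE bc).
  by exists c, a, b; rewrite setUAC [[set a; c]]setUC.
by exists b, a, c; rewrite [[set a; b]]setUC.
Qed.

Lemma key_bounds3 v w u x : kp w < kp v -> kp v < kp u -> x \in [set v; w; u] ->
  kp w <= kp x <= kp u.
Proof.
move=> wv vu; have wu := lt_trans wv vu.
by rewrite !inE -orbA => /or3P [] /eqP ->; rewrite ?lexx ?ltW.
Qed.

Lemma sorted3_key_inj v w u v' w' u' :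
  kp w < kp v -> kp v < kp u -> kp w' < kp v' -> kp v' < kp u' ->
  [set v; w; u] = [set v'; w'; u'] -> (v, (w, u)) = (v', (w', u')).
Proof.
move=> wv vu wv' vu' E.
have in3 (x y z : 'I_n) : [/\ x \in [set x; y; z], y \in [set x; y; z] & z \in [set x; y; z]].
  by rewrite !inE !eqxx ?orbT.
have [v1 w1 u1] := in3 v w u; have [v1' w1' u1'] := in3 v' w' u'.
rewrite E in v1 w1 u1; rewrite -E in v1' w1' u1'.
have /andP [le_ww' le_w'u] := key_bounds3 wv vu w1'.
have /andP [le_w'w _] := key_bounds3 wv' vu' w1.
have /andP [_ le_uu'] := key_bounds3 wv' vu' u1.
have /andP [_ le_u'u] := key_bounds3 wv vu u1'.
have ew : w = w' by apply: key_inj; apply/eqP; rewrite eq_le le_ww' le_w'w.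
have eu : u = u' by apply: key_inj; apply/eqP; rewrite eq_le le_uu' le_u'u.
move: v1; rewrite !inE -ew -eu -orbA => /or3P [/eqP -> //||] /eqP ev.
- by move: wv; rewrite ev ltxx.
- by move: vu; rewrite ev ltxx.
Qed.

Definition facets := [set A : {set 'I_n} | [&& A \subset T, #|A| == 3%N & facet p T A]].

Definition sorted_facets :=
  [set t : 'I_n * ('I_n * 'I_n) | (t.1 \in T) && (t.2 \in middle_edges t.1)].

Definition triple_set (t : 'I_n * ('I_n * 'I_n)) := [set t.1; t.2.1; t.2.2].

Lemma triple_set_sorted_facets : triple_set @: sorted_facets = facets.
Proof.
apply/setP => A; apply/imsetP/idP.
  case=> -[v [w u]]; rewrite !inE /= => /andP [vT].
  case/and5P => /andP [wv wT] /andP [uv uT] lt_wv lt_vu F ->.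
  have wu : w != u by apply: contraTneq lt_wv => ->; rewrite -leNgt ltW.
  have vw : v != w by rewrite eq_sym.
  have vu : v != u by rewrite eq_sym.
  rewrite /triple_set /= F cards3 // eqxx !andbT.
  by apply/subsetP => x; rewrite !inE -orbA => /or3P [] /eqP ->.
rewrite inE => /and3P [AT /eqP/card3P [a [b [c [ab ac bc EA]]]] F].
have [v [w [u [E lt_wv lt_vu]]]] := sort3_key ab ac bc.
rewrite E in EA; subst A.
have vwuT : [/\ v \in T, w \in T & u \in T].
  by split; apply: (subsetP AT); rewrite !inE eqxx ?orbT.
have [vT wT uT] := vwuT.
have wv : w != v by apply: contraTneq lt_wv => ->; rewrite ltxx.
have uv : u != v by apply: contraTneq lt_vu => ->; rewrite ltxx.
by exists (v, (w, u)); rewrite // !inE /= vT wv wT uv uT lt_wv lt_vu.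
Qed.

Lemma triple_set_inj : {in sorted_facets &, injective triple_set}.
Proof.
move=> [v [w u]] [v' [w' u']]; rewrite !inE /=.
case/andP => _ /and5P [_ _ lt_wv lt_vu _]; case/andP => _ /and5P [_ _ lt_wv' lt_vu' _].
exact: sorted3_key_inj.
Qed.

Lemma card_sorted_facets : #|sorted_facets| = (\sum_(v in T) #|middle_edges v|)%N.
Proof.
rewrite -sum1_card (eq_bigl (fun t => (t.1 \in T) && (t.2 \in middle_edges t.1))).
  by rewrite -(pair_big_dep (mem T) (fun v wc => wc \in middle_edges v)
    (fun _ _ => 1%N)); apply: eq_bigr => v _; rewrite sum1_card.
by move=> t; rewrite inE.
Qed.

Lemma card_key_interior : (1 < #|T|)%N ->
  #|[set v in T | key_interior v]| = (#|T| - 2)%N.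
Proof.
move=> T2; have /card_gt0P [x0 x0T] : (0 < #|T|)%N by apply: ltnW.
have [vmin vminT Hmin] := arg_minP (fun i => kp i) x0T.
have [vmax vmaxT Hmax] := arg_maxP (fun i => kp i) x0T.
have {}vminT : vmin \in T by []; have {}vmaxT : vmax \in T by [].
have lt_kp x y : x != y -> kp x <= kp y -> kp x < kp y.
  by move=> xy; rewrite le_eqVlt (negbTE (kp_neq xy)).
have extremal v : v \in T -> ~~ key_interior v = (v == vmin) || (v == vmax).
  move=> vT; rewrite /key_interior.
  have [->|vn] /= := eqVneq v vmin.
    by apply/nandP; left; apply/exists_inP => -[x xT]; rewrite ltNge Hmin.
  have [->|vx] /= := eqVneq v vmax.
    by apply/nandP; right; apply/exists_inP => -[x xT]; apply/negP; rewrite -leNgt; apply: Hmax.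
  apply/negbF/andP; split; apply/exists_inP.
    by exists vmin => //; apply: lt_kp; [rewrite eq_sym | exact: Hmin].
  by exists vmax => //; apply: lt_kp; [| exact: Hmax].
have min_max : vmin != vmax.
  have /card_gt0P [x] : (0 < #|T :\ vmin|)%N by rewrite (cardsD1 vmin T) vminT in T2.
  rewrite in_setD1 => /andP [xv xT]; apply: contraTneq (Hmin x xT) => E.
  by rewrite -ltNge; apply: lt_kp => //; rewrite E; apply: Hmax.
have ED : T :\: [set v in T | key_interior v] = [set vmin; vmax].
  apply/setP => x; rewrite !inE; have [xT|xT] /= := boolP (x \in T).
    by rewrite andbT extremal.
  by apply/esym/norP; split; apply: contraNneq xT => ->.
have := cardsID [set v in T | key_interior v] T.
rewrite ED cards2 min_max (setIidPr _) ?subsetIl //.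
  by move=> <-; rewrite addnK.
by apply/subsetP => x; rewrite inE => /andP [].
Qed.

Lemma card_facets : (3 < #|T|)%N -> #|facets| = (2 * #|T| - 4)%N.
Proof.
move=> T4; rewrite -triple_set_sorted_facets card_in_imset; last exact: triple_set_inj.
rewrite card_sorted_facets (eq_bigr _ (fun v vT => card_middle_edges vT T4)).
rewrite -big_mkcondr /= (eq_bigl (mem [set v in T | key_interior v])) => [|v].
  by rewrite sum_nat_const card_key_interior ?(ltnW (ltnW T4)) // mulnBl mulnC.
by rewrite /= inE.
Qed.

End LiftedFacets.

Local Close Scope ring_scope.

(** * Double counting *)

Lemma card_supersets_within (I : finType) (A S : {set I}) k :
  [disjoint A & S] ->
  #|[set B : {set I} | [&& #|B| == #|A| + k, A \subset B & B :\: A \subset S]]| =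
  'C(#|S|, k).
Proof.
move=> AS; rewrite -cards_draws -[RHS](card_in_imset (f := setU A)); last first.
  move=> C1 C2; rewrite !inE => /andP [C1S _] /andP [C2S _] /setP E.
  apply/setP => x; have := E x; rewrite !inE; case: (boolP (x \in A)) => //= xA _.
  have xS := disjointFr AS xA.
  by apply/idP/idP => [/(subsetP C1S)|/(subsetP C2S)]; rewrite xS.
apply: eq_card => B; rewrite inE; apply/and3P/imsetP.
  case=> /eqP cB AB BS; exists (B :\: A); last by rewrite -{1}(setIidPr AB) setID.
  by rewrite inE BS cardsD (setIidPr AB) cB addKn /=.
case=> C; rewrite inE => /andP [CS /eqP cC] ->.
have AC : [disjoint A & C] by apply: disjointWr AS.
split; last 2 first.
- exact: subsetUl.
- by rewrite setDUl setDv set0U (subset_trans (subsetDl _ _)).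
by rewrite cardsU (disjoint_setI0 AC) cards0 subn0 cC.
Qed.

Lemma sum_bin_diag M k : \sum_(i < M) 'C(i.+1, k.+1) = 'C(M.+1, k.+2).
Proof.
elim: M => [|M IH]; first by rewrite big_ord0 bin_small.
by rewrite big_ord_recr /= IH [RHS]binS.
Qed.

Lemma sum_mul_bin N k :
  \sum_(i < N) i.+1 * (N - i) * 'C(i, k) = k.+1 * 'C(N.+2, k.+3).
Proof.
elim: N => [|N IH]; first by rewrite big_ord0 bin_small ?muln0.
rewrite (eq_bigr (fun i : 'I_N.+1 => i.+1 * (N - i) * 'C(i, k) + k.+1 * 'C(i.+1, k.+1))).
  rewrite big_split /= big_ord_recr /= subnn muln0 mul0n addn0 IH.
  by rewrite -big_distrr /= sum_bin_diag -mulnDr [in RHS]binS addnC.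
move=> i _; have le_iN : i <= N by rewrite -ltnS.
by rewrite subSn // mulnS mulnDl addnC (mul_bin_diag i.+1 k).
Qed.

(* The matrix ('C(i, k))_(i, k < N) is unitriangular. *)
Lemma binomial_transform_inj N (s t : nat -> nat) :
  (forall k, k < N -> \sum_(i < N) s i * 'C(i, k) = \sum_(i < N) t i * 'C(i, k)) ->
  forall i, i < N -> s i = t i.
Proof.
move=> H; suff P d i : N - d <= i < N -> s i = t i.
  by move=> i iN; apply: (P N); rewrite subnn iN.
elim: d i => [|d IH] i /andP [le_i lt_i]; first by move: le_i; rewrite subn0 leqNgt lt_i.
have [le_di|lt_id] := leqP (N - d) i; first by apply: IH; rewrite le_di.
have := H i lt_i; rewrite (bigD1 (Ordinal lt_i)) //= [X in _ = X](bigD1 (Ordinal lt_i)) //=.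
rewrite binn !muln1.
set S := (X in _ + X = _); set S' := (X in _ = _ + X).
suff -> : S = S' by move/addIn.
apply: eq_bigr => j /eqP ji; have [lt_ji|le_ij] := ltnP j i.
  by rewrite bin_small // !muln0.
have ij : i != j :> nat by apply/eqP => E; apply/ji/val_inj.
by rewrite IH // ltn_ord andbT; lia.
Qed.

Section Counting.
Variables (R : realFieldType) (n : nat) (p : 'I_n -> point R).
Hypothesis gp : general_position p.
Implicit Types A T : {set 'I_n}.

Definition one_sided T A := (T :\: A \subset inside p A) + (T :\: A \subset outside p A).

Lemma one_sided_facet T A : A \subset T -> #|A| = 3 -> 3 < #|T| ->
  one_sided T A = facet p T A.
Proof.
move=> AT A3 T4; rewrite /one_sided /facet.
have /set0Pn [x xTA] : T :\: A != set0.
  by rewrite -card_gt0 cardsD (setIidPr AT) A3 subn_gt0.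
case: (boolP (T :\: A \subset inside p A)) => [/subsetP/(_ x xTA) xin|_] //.
suff -> : (T :\: A \subset outside p A) = false by [].
by apply/negbTE/negP => /subsetP/(_ x xTA); rewrite in_setC in_setU xin orbT.
Qed.

Lemma sum_one_sided T : 3 <= #|T| ->
  \sum_(A : {set 'I_n} | (A \subset T) && (#|A| == 3)) one_sided T A = 2 * #|T| - 4.
Proof.
rewrite leq_eqVlt => /orP [/eqP T3|T4].
  rewrite (big_pred1 T); first by rewrite /one_sided setDv !sub0set -T3.
  move=> A /=; apply/andP/eqP => [[AT /eqP A3]|->]; last by rewrite subxx -T3.
  by apply/eqP; rewrite eqEcard AT A3 -T3.
have [e key_inj] := exists_key_inj gp.
rewrite -(card_facets gp key_inj T4) -sum1_card big_mkcond [RHS]big_mkcond.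
apply: eq_bigr => A _; rewrite inE.
by case: (boolP (A \subset T)) => //= AT; case: eqP => //= A3; rewrite one_sided_facet.
Qed.

Lemma sum_one_sided_draws k :
  \sum_(T : {set 'I_n} | #|T| == k.+3)
    \sum_(A : {set 'I_n} | (A \subset T) && (#|A| == 3)) one_sided T A =
  \sum_(A : {set 'I_n} | #|A| == 3) ('C(circle_order p A, k) + 'C(#|outside p A|, k)).
Proof.
rewrite (exchange_big_dep (fun A => #|A| == 3)) => [|T A _ /andP []//].
apply: eq_bigr => A /eqP A3; rewrite big_split /=.
have count (S : {set 'I_n}) : [disjoint A & S] ->
    \sum_(T : {set 'I_n} | (#|T| == k.+3) && ((A \subset T) && (#|A| == 3))) (T :\: A \subset S) =
    'C(#|S|, k).
  move=> AS; rewrite -[RHS](card_supersets_within _ AS) -[RHS]sum1_card.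
  rewrite big_mkcond [RHS]big_mkcond; apply: eq_bigr => T _; rewrite inE A3 eqxx andbT.
  by case: (#|T| == k.+3); case: (A \subset T); case: (T :\: A \subset S).
by rewrite !count ?disjoint_inside ?disjoint_outside.
Qed.

Lemma card_inside_triple A : #|A| = 3 -> #|A :|: inside p A| = 3 + circle_order p A.
Proof. by move=> A3; rewrite cardsU (disjoint_setI0 (disjoint_inside p A)) cards0 subn0 A3. Qed.

Lemma card_outside A : #|A| = 3 -> #|outside p A| = n - 3 - circle_order p A.
Proof.
move=> A3; have := cardsC (A :|: inside p A).
by rewrite card_ord card_inside_triple // /outside; lia.
Qed.

Lemma sum_circle_order (g : nat -> nat) :
  \sum_(A : {set 'I_n} | #|A| == 3) g (circle_order p A) =
  \sum_(i < n - 2) c_count p i * g i.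
Proof.
rewrite (eq_bigr (fun A => \sum_(i < n - 2 | circle_order p A == i) g i)) => [|A /eqP A3].
  rewrite (exchange_big_dep xpredT) //=; apply: eq_bigr => i _.
  by rewrite /c_count -sum1dep_card big_distrl /=; apply: eq_bigr => A _; rewrite mul1n.
have ord_lt : circle_order p A < n - 2.
  by have := max_card (A :|: inside p A); rewrite card_ord card_inside_triple //; lia.
by rewrite (big_pred1 (Ordinal ord_lt)).
Qed.

Lemma sum_c_count_binomial k :
  \sum_(j < n - 2) (c_count p j + c_count p (n - 3 - j)) * 'C(j, k) =
  2 * k.+1 * 'C(n, k.+3).
Proof.
have rev_sum : \sum_(j < n - 2) c_count p (n - 3 - j) * 'C(j, k) =
    \sum_(j < n - 2) c_count p j * 'C(n - 3 - j, k).
  rewrite (reindex_inj rev_ord_inj) /=; apply: eq_bigr => j _; have := ltn_ord j.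
  by move=> lt_j; congr (c_count p _ * 'C(_, k)); lia.
under eq_bigr do rewrite mulnDl.
rewrite big_split /= rev_sum -big_split /=.
under eq_bigr do rewrite -mulnDr.
rewrite -(sum_circle_order (fun o => 'C(o, k) + 'C(n - 3 - o, k))).
under eq_bigr => A /eqP A3 do rewrite -card_outside //.
rewrite -sum_one_sided_draws.
under eq_bigr => T /eqP T3 do rewrite sum_one_sided T3 //.
rewrite (eq_bigl (mem [set T : {set 'I_n} | #|T| == k.+3])) => [|T]; last by rewrite /= inE.
by rewrite sum_nat_const card_draws card_ord mulnC; congr (_ * _); lia.
Qed.

End Counting.

Theorem mainTheorem5 (R : realFieldType) (n : nat) (p : 'I_n -> point R) :
  (3 <= n)%N -> general_position p ->
  forall i : nat, (i <= n - 3)%N ->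
    (c_count p i + c_count p (n - i - 3) = 2 * (i + 1) * (n - 2 - i))%N.
Proof.
move=> n3 gp i le_i.
have n_eq : (n - 2).+2 = n by lia.
pose s j := c_count p j + c_count p (n - 3 - j).
pose t j := 2 * j.+1 * (n - 2 - j).
rewrite subnAC addn1; apply: (binomial_transform_inj (N := n - 2) (s := s) (t := t)); last by lia.
move=> k _; rewrite (sum_c_count_binomial gp) -mulnA.
have := sum_mul_bin (n - 2) k; rewrite n_eq => <-; rewrite big_distrr /=.
by apply: eq_bigr => j _; rewrite /t !mulnA.
Qed.
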